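(* Let $\mu\in\mathcal C$ be nilpotent and suppose $P_\mu=\lambda\,\mathrm{Id}+\tfrac12(D+D^* )$ for some $\lambda\in\mathbb R$ and $D\in\mathrm{Der}(\mu)$. Then $$0=\|\pi(D^* )\mu\|^2+\mathrm{tr}\big(Q_\mu[D,D^*]\big),$$ where $Q_\mu\in\mathrm{End}(\mathfrak g)$ is defined by $\langle Q_\mu v,w\rangle=\sum_i\langle\mu(v,e_i),\mu(w,e_i)\rangle$ for $v,w\in\mathfrak g$.
   Context: $\mathfrak g$ is a real vector space of dimension $2n$ with complex structure $J$ and inner product $\langle\cdot,\cdot\rangle$ for which $J$ is orthogonal; $e_1,\dots,e_{2n}$ is an orthonormal basis; $^*$ denotes adjoint. Brackets are skew-symmetric bilinear maps $\nu:\mathfrak g\times\mathfrak g\to\mathfrak g$ with $\|\nu\|^2=\sum_{i<j}\|\nu(e_i,e_j)\|^2$; $\mathcal C$ is the set of brackets satisfying the Jacobi identity and $\nu(J\cdot,\cdot)=J\nu(\cdot,\cdot)$. For $A\in\mathrm{End}(\mathfrak g)$, $\pi(A)\nu=A\nu(\cdot,\cdot)-\nu(A\cdot,\cdot)-\nu(\cdot,A\cdot)$. $\mathrm{Der}(\nu)=\{D\in\mathrm{End}(\mathfrak g): DJ=JD,\ \pi(D)\nu=0\}$. $P_\nu:=\nu\nu^*$, i.e. $P_\nu v=\sum_{i<j}\langle v,\nu(e_i,e_j)\rangle\nu(e_i,e_j)$. *)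

(* The real vector space g of dimension 2n is modelled as
   column vectors 'cV[R]_(n.*2) with the standard inner product; the
   standard basis (delta_mx i 0) is the orthonormal basis e_1..e_{2n};
   endomorphisms are square matrices acting on the left, adjoint = transpose. *)
From HB Require Import structures.
From mathcomp Require Import all_boot all_order all_algebra.
Set Implicit Arguments. Unset Strict Implicit. Unset Printing Implicit Defensive.
Import Order.TTheory GRing.Theory Num.Theory.
Local Open Scope ring_scope.

Section Defs.
Variables (R : realFieldType) (m : nat).

Definition vec := 'cV[R]_m.
Definition bracket := vec -> vec -> vec.

Definition dotv (u v : vec) : R := (u^T *m v) 0 0.

Definition ebasis (i : 'I_m) : vec := delta_mx i 0.

Definition bnorm2 (nu : bracket) : R :=
  \sum_(i < m) \sum_(j < m | (i < j)%N) dotv (nu (ebasis i) (ebasis j)) (nu (ebasis i) (ebasis j)).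

Definition is_bracket (nu : bracket) : Prop :=
  [/\ forall (a : R) x y z, nu (a *: x + y) z = a *: nu x z + nu y z,
      forall (a : R) x y z, nu x (a *: y + z) = a *: nu x y + nu x z
    & forall x y, nu x y = - nu y x].

Definition jacobi (nu : bracket) : Prop :=
  forall x y z, nu x (nu y z) + nu y (nu z x) + nu z (nu x y) = 0.

Definition orth_cplx_str (J : 'M[R]_m) : Prop :=
  J *m J = - 1%:M /\ J^T *m J = 1%:M.

Definition in_C (J : 'M[R]_m) (nu : bracket) : Prop :=
  [/\ is_bracket nu, jacobi nu & forall x y, nu (J *m x) y = J *m nu x y].

Definition piA (A : 'M[R]_m) (nu : bracket) : bracket :=
  fun x y => A *m nu x y - nu (A *m x) y - nu x (A *m y).

Definition is_der (J : 'M[R]_m) (nu : bracket) (D : 'M[R]_m) : Prop :=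
  D *m J = J *m D /\ forall x y, piA D nu x y = 0.

Definition iter_bracket (nu : bracket) (xs : seq vec) (x : vec) : vec :=
  foldr (fun y acc => nu y acc) x xs.

(* nilpotent: the lower central series vanishes at some step, i.e. all
   k-fold brackets (which span the k-th term of the lower central series) are 0 *)
Definition nilpotent_br (nu : bracket) : Prop :=
  exists k : nat, forall (xs : k.-tuple vec) (x : vec), iter_bracket nu xs x = 0.

(* P_nu = nu nu^*, i.e. P v = sum_{i<j} <v, nu(e_i,e_j)> nu(e_i,e_j) *)
Definition Pmat (nu : bracket) : 'M[R]_m :=
  \sum_(i < m) \sum_(j < m | (i < j)%N) (nu (ebasis i) (ebasis j) *m (nu (ebasis i) (ebasis j))^T).

End Defs.

Arguments dotv {R m}.
Arguments ebasis {R m}.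
Arguments bnorm2 {R m}.
Arguments is_bracket {R m}.
Arguments jacobi {R m}.
Arguments orth_cplx_str {R m}.
Arguments in_C {R m}.
Arguments piA {R m}.
Arguments is_der {R m}.
Arguments iter_bracket {R m}.
Arguments nilpotent_br {R m}.
Arguments Pmat {R m}.

From HB Require Import structures.
From mathcomp Require Import all_boot all_order all_algebra.
From mathcomp Require Import ring lra.
Import Order.TTheory GRing.Theory Num.Theory.
Local Open Scope ring_scope.

(* Pair brackets by <<nu, nu'>> := sum_(i,j) <nu(e_i,e_j), nu'(e_i,e_j)>, which
   is twice the inner product whose norm is ||.||; for it pi(A)^* = pi(A^T).
   Hence 2 ||pi(D^T) mu||^2 = <<pi(D) pi(D^T) mu, mu>> = <<pi([D,D^T]) mu, mu>>,
   since pi is a representation of gl(g) and pi(D) mu = 0.  For every C one has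
   <<pi(C) mu, mu>> = 2 tr(C P_mu) - 2 tr(Q_mu C), and tr([D,D^T] P_mu) = 0
   because P_mu is a combination of 1, D and D^T. *)

Lemma sum_sym_diag0 (V : zmodType) n (f : 'I_n -> 'I_n -> V) :
  (forall i j, f i j = f j i) -> (forall i, f i i = 0) ->
  \sum_i \sum_j f i j = (\sum_(i < n) \sum_(j < n | (i < j)%N) f i j) *+ 2.
Proof.
move=> fC f0.
have split_row i :
    \sum_j f i j = \sum_(j < n | (i < j)%N) f i j + \sum_(j < n | (j < i)%N) f i j.
  rewrite (bigID (fun j : 'I_n => (i < j)%N)) /= [X in _ + X](bigD1 i) ?ltnn //= f0 add0r.
  by congr (_ + _); apply: eq_bigl => j; rewrite -leqNgt ltn_neqAle andbC.
rewrite (eq_bigr _ (fun i _ => split_row i)) big_split /= mulr2n; congr (_ + _).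
rewrite (exchange_big_dep xpredT) //=.
by apply: eq_bigr => i _; apply: eq_bigr => j _; rewrite fC.
Qed.

Lemma mxtrace_commutator_mul (R : comNzRingType) m (A B : 'M[R]_m) (a b c : R) :
  \tr ((A *m B - B *m A) *m (a%:M + b *: A + c *: B)) = 0.
Proof.
rewrite !mulmxDr mul_mx_scalar -!scalemxAr !mxtraceD !mxtraceZ !mulmxBl !raddfB /=.
rewrite (mxtrace_mulC A B) [\tr (B *m A *m A)]mxtrace_mulC.
by rewrite [\tr (A *m B *m B)]mxtrace_mulC !mulmxA !subrr !mulr0 !addr0.
Qed.

Lemma fixed_oppr_eq0 {R : numFieldType} {V : lmodType R} (x : V) : x = - x -> x = 0.
Proof.
move=> xN; have : 2%:R *: x = 0 by rewrite scaler_nat mulr2n {1}xN addNr.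
by move/eqP; rewrite scaler_eq0 pnatr_eq0 /= => /eqP.
Qed.

Section InnerProduct.
Context {R : realFieldType} {m : nat}.
Local Notation vec := 'cV[R]_m.
Local Notation e := (@ebasis R m).
Implicit Types (u v w : vec) (A : 'M[R]_m).

Lemma dotvC u v : dotv u v = dotv v u.
Proof. by rewrite /dotv -[u^T *m v]trmxK trmx_mul trmxK mxE. Qed.

Lemma dotvDl u v w : dotv (u + v) w = dotv u w + dotv v w.
Proof. by rewrite /dotv linearD mulmxDl mxE. Qed.

Lemma dotvZl a u v : dotv (a *: u) v = a * dotv u v.
Proof. by rewrite /dotv linearZ -scalemxAl mxE. Qed.

Lemma dotvNl u v : dotv (- u) v = - dotv u v.
Proof. by rewrite /dotv linearN mulNmx mxE. Qed.

Lemma dotvNr u v : dotv u (- v) = - dotv u v.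
Proof. by rewrite dotvC dotvNl dotvC. Qed.

Lemma dotvBl u v w : dotv (u - v) w = dotv u w - dotv v w.
Proof. by rewrite dotvDl dotvNl. Qed.

Lemma dotvBr u v w : dotv u (v - w) = dotv u v - dotv u w.
Proof. by rewrite dotvC dotvBl !(dotvC u). Qed.

Lemma dotv_suml I (r : seq I) (P : pred I) (F : I -> vec) w :
  dotv (\sum_(i <- r | P i) F i) w = \sum_(i <- r | P i) dotv (F i) w.
Proof. by rewrite /dotv raddf_sum mulmx_suml summxE. Qed.

Lemma dotvMl A u v : dotv (A *m u) v = dotv u (A^T *m v).
Proof. by rewrite /dotv trmx_mul mulmxA. Qed.

Lemma dotv_ebasis u i : dotv u (e i) = u i 0.
Proof. by rewrite /dotv /ebasis -colE !mxE. Qed.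

Lemma mulmx_ebasis A i : A *m e i = \sum_k A k i *: e k.
Proof.
rewrite {1}(matrix_sum_delta (A *m e i)); apply: eq_bigr => k _.
by rewrite big_ord1 /ebasis -colE mxE.
Qed.

Lemma linear_mulmx_ebasis {V : lmodType R} {f : vec -> V} :
  linear f -> forall A i, f (A *m e i) = \sum_k A k i *: f (e k).
Proof.
move=> fL A i.
pose F : {linear vec -> V} := HB.pack f (GRing.isLinear.Build _ _ _ _ f fL).
by rewrite mulmx_ebasis -[f _]/(F _) linear_sum; apply: eq_bigr => k _; exact: linearZ.
Qed.

Lemma sum_dotv_mulmx_ebasis (f g : vec -> vec) A :
  linear f -> linear g ->
  \sum_i dotv (f (A *m e i)) (g (e i)) = \sum_i dotv (f (e i)) (g (A^T *m e i)).
Proof.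
move=> fL gL.
under eq_bigr => i _ do
  rewrite (linear_mulmx_ebasis fL) dotv_suml (eq_bigr _ (fun k _ => dotvZl _ _ _)).
under [RHS]eq_bigr => i _ do
  rewrite (linear_mulmx_ebasis gL) dotvC dotv_suml (eq_bigr _ (fun k _ => dotvZl _ _ _)).
rewrite exchange_big; apply: eq_bigr => i _; apply: eq_bigr => k _.
by rewrite mxE dotvC.
Qed.

End InnerProduct.

Section Brackets.
Context {R : realFieldType} {m : nat}.
Local Notation vec := 'cV[R]_m.
Local Notation e := (@ebasis R m).
Implicit Types (x y z : vec) (A B C : 'M[R]_m) (nu : bracket R m).

Definition bdot nu nu' : R := \sum_i \sum_j dotv (nu (e i) (e j)) (nu' (e i) (e j)).

Lemma bdotBl nu1 nu2 nu' :
  bdot (fun x y => nu1 x y - nu2 x y) nu' = bdot nu1 nu' - bdot nu2 nu'.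
Proof.
rewrite /bdot -sumrB; apply: eq_bigr => i _.
by rewrite -sumrB; apply: eq_bigr => j _; rewrite dotvBl.
Qed.

Lemma bdotBr nu nu1 nu2 :
  bdot nu (fun x y => nu1 x y - nu2 x y) = bdot nu nu1 - bdot nu nu2.
Proof.
rewrite /bdot -sumrB; apply: eq_bigr => i _.
by rewrite -sumrB; apply: eq_bigr => j _; rewrite dotvBr.
Qed.

Lemma bdot_mulmxl A nu nu' :
  bdot (fun x y => A *m nu x y) nu' = bdot nu (fun x y => A^T *m nu' x y).
Proof. by apply: eq_bigr => i _; apply: eq_bigr => j _; rewrite dotvMl. Qed.

Lemma bdot_skew_triu nu nu' :
  (forall x y, nu x y = - nu y x) -> (forall x y, nu' x y = - nu' y x) ->
  bdot nu nu' =
    (\sum_(i < m) \sum_(j < m | (i < j)%N) dotv (nu (e i) (e j)) (nu' (e i) (e j))) *+ 2.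
Proof.
move=> nuN nu'N; apply: sum_sym_diag0 => [i j | i].
  by rewrite nuN nu'N dotvNl dotvNr opprK.
by rewrite (fixed_oppr_eq0 _ (nuN _ _)) /dotv trmx0 mul0mx mxE.
Qed.

Section OneBracket.
Context {nu : bracket R m} (nu_br : is_bracket nu).

Lemma bracketN x y : nu x y = - nu y x.
Proof. by case: nu_br. Qed.

Lemma bracket_linl z : linear (nu^~ z).
Proof. by case: nu_br => nuL _ _ a x y; exact: nuL. Qed.

Lemma bracket_linr z : linear (nu z).
Proof. by case: nu_br => _ nuR _ a x y; exact: nuR. Qed.

Lemma bracketBl x y z : nu (x - y) z = nu x z - nu y z.
Proof. by rewrite addrC -scaleN1r (bracket_linl z) scaleN1r addrC. Qed.

Lemma bracketBr x y z : nu z (x - y) = nu z x - nu z y.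
Proof. by rewrite addrC -scaleN1r (bracket_linr z) scaleN1r addrC. Qed.

Lemma piA_bracket A : is_bracket (piA A nu).
Proof.
have piAN x y : piA A nu x y = - piA A nu y x.
  rewrite /piA (bracketN x) (bracketN (A *m x)) (bracketN x (A *m y)) mulmxN.
  by apply/matrixP => i j; rewrite !mxE; ring.
have piAL z : linear (piA A nu ^~ z).
  move=> a x y; rewrite /piA mulmxDr -scalemxAr !(bracket_linl z).
  rewrite (bracket_linl (A *m z)) mulmxDr -scalemxAr.
  by apply/matrixP => i j; rewrite !mxE; ring.
split=> [a x y z | a z x y |//]; first exact: piAL.
by rewrite piAN piAL (piAN x) (piAN y) scalerN opprD !opprK.
Qed.

Lemma piA_commutator A B x y :
  piA A (piA B nu) x y - piA B (piA A nu) x y = piA (A *m B - B *m A) nu x y.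
Proof.
rewrite /piA !mulmxBr !mulmxBl !bracketBl !bracketBr !mulmxA.
by apply/matrixP => i j; rewrite !mxE; ring.
Qed.

Lemma piA_der_commutator A B :
  (forall x y, piA A nu x y = 0) ->
  forall x y, piA A (piA B nu) x y = piA (A *m B - B *m A) nu x y.
Proof.
move=> Ader x y; rewrite -piA_commutator [piA B _ x y]/piA !Ader.
by rewrite mulmx0 !subr0.
Qed.

End OneBracket.

Section TwoBrackets.
Context {nu nu' : bracket R m} (nu_br : is_bracket nu) (nu'_br : is_bracket nu').

Lemma bdot_bracket_mulmxl A :
  bdot (fun x y => nu (A *m x) y) nu' = bdot nu (fun x y => nu' (A^T *m x) y).
Proof.
rewrite /bdot exchange_big [RHS]exchange_big; apply: eq_bigr => j _.
exact: sum_dotv_mulmx_ebasis (bracket_linl nu_br _) (bracket_linl nu'_br _).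
Qed.

Lemma bdot_bracket_mulmxr A :
  bdot (fun x y => nu x (A *m y)) nu' = bdot nu (fun x y => nu' x (A^T *m y)).
Proof.
apply: eq_bigr => i _.
exact: sum_dotv_mulmx_ebasis (bracket_linr nu_br _) (bracket_linr nu'_br _).
Qed.

Lemma bdot_piA_adj A : bdot (piA A nu) nu' = bdot nu (piA A^T nu').
Proof.
rewrite /piA !bdotBl !bdotBr.
by rewrite bdot_mulmxl bdot_bracket_mulmxl bdot_bracket_mulmxr.
Qed.

End TwoBrackets.

Section SelfPairing.
Context {mu : bracket R m} (mu_br : is_bracket mu) {Q : 'M[R]_m}.
Hypothesis QE : forall v w : 'cV[R]_m,
  dotv (Q *m v) w = \sum_i dotv (mu v (ebasis i)) (mu w (ebasis i)).

Lemma bdot_mulmxl_Pmat C : bdot (fun x y => C *m mu x y) mu = \tr (C *m Pmat mu) *+ 2.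
Proof.
rewrite bdot_skew_triu => [| x y | x y]; last 2 first.
- by rewrite (bracketN mu_br) mulmxN.
- exact: bracketN.
congr (_ *+ 2); rewrite /Pmat mulmx_sumr raddf_sum; apply: eq_bigr => i _.
rewrite mulmx_sumr raddf_sum; apply: eq_bigr => j _.
by rewrite mulmxA /= mxtrace_mulC trace_mx11 dotvC.
Qed.

Lemma bdot_bracket_mulmxl_trace C : bdot (fun x y => mu (C *m x) y) mu = \tr (Q *m C).
Proof.
apply: eq_bigr => i _.
by rewrite -QE dotv_ebasis mulmxA /ebasis -colE mxE.
Qed.

Lemma bdot_bracket_mulmx_swap C :
  bdot (fun x y => mu x (C *m y)) mu = bdot (fun x y => mu (C *m x) y) mu.
Proof.
rewrite /bdot exchange_big; apply: eq_bigr => i _; apply: eq_bigr => j _.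
by rewrite (bracketN mu_br (e j)) (bracketN mu_br (e j) (e i)) dotvNl dotvNr opprK.
Qed.

Lemma bdot_piA_self C :
  bdot (piA C mu) mu = (\tr (C *m Pmat mu) - \tr (Q *m C)) *+ 2.
Proof.
rewrite /piA !bdotBl bdot_mulmxl_Pmat bdot_bracket_mulmx_swap.
by rewrite bdot_bracket_mulmxl_trace mulrnBl mulr2n opprD addrA.
Qed.

End SelfPairing.
End Brackets.

Theorem lemma3p1 (R : realFieldType) (n : nat) (J : 'M[R]_(n.*2))
  (mu : bracket R n.*2) (lambda : R) (D : 'M[R]_(n.*2)) (Q : 'M[R]_(n.*2)) :
  orth_cplx_str J ->
  in_C J mu ->
  nilpotent_br mu ->
  is_der J mu D ->
  Pmat mu = lambda%:M + 2^-1 *: (D + D^T) ->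
  (forall v w : 'cV[R]_(n.*2),
      dotv (Q *m v) w = \sum_(i < n.*2) dotv (mu v (ebasis i)) (mu w (ebasis i))) ->
  0 = bnorm2 (piA D^T mu) + \tr (Q *m (D *m D^T - D^T *m D)).
Proof.
move=> _ [mu_br _ _] _ [_ Dder] PE QE.
have piDt_br := piA_bracket mu_br D^T.
have norm2 : bdot (piA D^T mu) (piA D^T mu) = bnorm2 (piA D^T mu) *+ 2.
  by case: piDt_br => _ _ piDtN; exact: bdot_skew_triu.
have comm : bdot (piA D (piA D^T mu)) mu = bdot (piA (D *m D^T - D^T *m D) mu) mu.
  apply: eq_bigr => i _; apply: eq_bigr => j _.
  by rewrite (piA_der_commutator mu_br _ _ Dder).
have trP : \tr ((D *m D^T - D^T *m D) *m Pmat mu) = 0.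
  by rewrite PE scalerDr addrA mxtrace_commutator_mul.
move: norm2; rewrite -(bdot_piA_adj piDt_br mu_br) comm (bdot_piA_self mu_br QE) trP.
by move=> norm2; lra.
Qed.
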